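(* Let $\mathbf{k}$ be a field of characteristic zero, let $(C^\bullet,\partial)$ be a complex of finite-dimensional $\mathbf{k}$-vector spaces of odd length $d=2r-1$ with a chirality operator $\Gamma$, and let $\mathcal B=\Gamma\partial+\partial\Gamma$. If $\mathcal B:C^\bullet\to C^\bullet$ is bijective, then the complex $(C^\bullet,\partial)$ is acyclic and $C^j=C^j_+\oplus C^j_-$ for all $j=0,\dots,d$, where $C^j_+=\operatorname{Ker}(\partial\circ\Gamma)\cap C^j$ and $C^j_-=\operatorname{Ker}\partial\cap C^j$.
   Context: A chirality operator is an involution $\Gamma:C^\bullet\to C^\bullet$ with $\Gamma(C^j)=C^{d-j}$ for all $j$. *)

From HB Require Import structures.
From mathcomp Require Import all_boot all_order all_algebra.
Set Implicit Arguments. Unset Strict Implicit. Unset Printing Implicit Defensive.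
Import GRing.Theory.
Local Open Scope ring_scope.
Local Open Scope vspace_scope.

(* A cochain complex C^0 -> C^1 -> ... -> C^d of finite-dimensional K-vector
   spaces is represented inside its total space V = (+)_j C^j: the graded
   pieces are subspaces C j (j = 0..d) of V forming a direct sum equal to V,
   and the differential is a linear endomorphism of V. *)
Definition graded_total (K : fieldType) (V : vectType K) (d : nat)
    (C : nat -> {vspace V}) : Prop :=
  (\sum_(j < d.+1) C j)%VS = fullv /\ directv (\sum_(j < d.+1) C j).

Definition is_complex (K : fieldType) (V : vectType K) (d : nat)
    (C : nat -> {vspace V}) (del : 'End(V)) : Prop :=
  [/\ graded_total d C,
      (forall j, (j < d)%N -> (del @: C j <= C j.+1)%VS),
      del @: C d = 0%VS &
      (del \o del)%VF = 0%R].

Definition is_chirality (K : fieldType) (V : vectType K) (d : nat)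
    (C : nat -> {vspace V}) (Gam : 'End(V)) : Prop :=
  (Gam \o Gam)%VF = \1%VF /\ (forall j, (j <= d)%N -> Gam @: C j = C (d - j)%N).

Definition acyclic (K : fieldType) (V : vectType K) (d : nat)
    (C : nat -> {vspace V}) (del : 'End(V)) : Prop :=
  (lker del :&: C 0%N = 0)%VS /\
  (forall j, (j < d)%N -> (lker del :&: C j.+1)%VS = del @: C j).

From HB Require Import structures.
From mathcomp Require Import all_boot all_order all_algebra.
From mathcomp Require Import zify.
Import GRing.Theory.
Local Open Scope ring_scope.
Local Open Scope vspace_scope.

(* With [dstar := Gam \o del \o Gam] we have [dstar \o dstar = 0] and
   [B \o Gam = del + dstar], so [del + dstar] is injective and so is its square,
   the Laplacian [lap := del \o dstar + dstar \o del]. The Laplacian commutes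
   with [del] and preserves every [C j], hence is invertible on each [C j].
   Writing [x = lap y] in [C j] gives the decomposition
   [x = dstar (del y) + del (dstar y)] into [Ker dstar] and [Ker del]; when
   [del x = 0] also [del y = 0], so [x = del (dstar y)] is exact. *)

Lemma lker0_limg_eq (K : fieldType) (V : vectType K) (f : 'End(V))
    (U : {vspace V}) :
  lker f == 0 -> (f @: U <= U)%VS -> f @: U = U.
Proof.
move=> /eqP f_inj fUU; apply/eqP; rewrite eqEdim fUU limg_dim_eq ?leqnn //.
by rewrite f_inj capv0.
Qed.

Section Laplacian.

Set Implicit Arguments.
Unset Strict Implicit.
Local Open Scope ring_scope.

Variables (K : fieldType) (V : vectType K) (del Gam : 'End(V)).
Hypothesis del_del : (del \o del)%VF = 0.
Hypothesis Gam_Gam : (Gam \o Gam)%VF = \1%VF.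
Hypothesis B_inj : injective ((Gam \o del)%VF + (del \o Gam)%VF).

Lemma delK v : del (del v) = 0.
Proof. by rewrite -comp_lfunE del_del lfunE. Qed.

Lemma GamK : involutive Gam.
Proof. by move=> v; rewrite -comp_lfunE Gam_Gam id_lfunE. Qed.

Definition dstar : 'End(V) := (Gam \o del \o Gam)%VF.

Lemma dstarE v : dstar v = Gam (del (Gam v)).
Proof. by rewrite !comp_lfunE. Qed.

Lemma dstarK v : dstar (dstar v) = 0.
Proof. by rewrite !dstarE GamK delK !linear0. Qed.

Lemma lker_dstar : lker dstar = lker (del \o Gam)%VF.
Proof.
apply/vspaceP => v; rewrite !memv_ker dstarE comp_lfunE.
by rewrite -{1}(linear0 Gam) (inj_eq (can_inj GamK)).
Qed.

Lemma del_add_dstar_inj : injective (fun v => del v + dstar v).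
Proof.
have BGamE v : del v + dstar v = ((Gam \o del)%VF + (del \o Gam)%VF) (Gam v).
  by rewrite add_lfunE !comp_lfunE GamK addrC.
by move=> u v; rewrite !BGamE => /B_inj /(can_inj GamK).
Qed.

Definition lap : 'End(V) := ((del \o dstar)%VF + (dstar \o del)%VF).

Lemma lapE v : lap v = del (dstar v) + dstar (del v).
Proof. by rewrite add_lfunE !comp_lfunE. Qed.

Lemma lap_inj : injective lap.
Proof.
have lap_sq v : lap v = del (del v + dstar v) + dstar (del v + dstar v).
  by rewrite lapE !linearD /= delK dstarK add0r addr0.
by move=> u v; rewrite !lap_sq => /del_add_dstar_inj /del_add_dstar_inj.
Qed.

Lemma lker_lap : (lker lap == 0)%VS.
Proof. exact/lker0P/lap_inj. Qed.

Lemma lap_del v : lap (del v) = del (lap v).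
Proof. by rewrite !lapE linearD /= !delK linear0 add0r addr0. Qed.

Lemma del_lap_eq0 v : (del (lap v) == 0) = (del v == 0).
Proof. by rewrite -lap_del -{1}(linear0 lap) (inj_eq lap_inj). Qed.

Lemma directv_lker_dstar_del (U : {vspace V}) :
  directv (lker dstar :&: U + lker del :&: U).
Proof.
apply/directv_addP/eqP; rewrite -subv0; apply/subvP => x.
rewrite !memv_cap !memv_ker => /andP[/andP[/eqP dsx _] /andP[/eqP dx _]].
rewrite memv0; apply/eqP/lap_inj.
by rewrite linear0 lapE dsx dx !linear0 addr0.
Qed.

Section Graded.

Variables (d : nat) (C : nat -> {vspace V}).
Hypothesis del_C : forall j, (j < d)%N -> (del @: C j <= C j.+1)%VS.
Hypothesis del_Cd : del @: C d = 0%VS.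
Hypothesis Gam_C : forall j, (j <= d)%N -> Gam @: C j = C (d - j)%N.

Lemma memv_del j x : (j < d)%N -> x \in C j -> del x \in C j.+1.
Proof. by move=> jd xC; apply: subvP (del_C jd) _ (memv_img del xC). Qed.

Lemma del_top x : x \in C d -> del x = 0.
Proof. by move=> xC; apply/eqP; rewrite -memv0 -del_Cd memv_img. Qed.

Lemma memv_Gam j x : (j <= d)%N -> x \in C j -> Gam x \in C (d - j)%N.
Proof. by move=> jd xC; rewrite -Gam_C ?memv_img. Qed.

(* [Gam] reflects [C j.+1] to [C (d - j.+1)], [del] raises it to [C (d - j)],
   and [Gam] reflects that back to [C j]. *)
Lemma memv_dstar j x : (j < d)%N -> x \in C j.+1 -> dstar x \in C j.
Proof.
move=> jd xC; rewrite dstarE.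
have -> : j = (d - (d - j.+1).+1)%N by lia.
apply: memv_Gam; first lia.
apply: memv_del; first lia.
by apply: memv_Gam.
Qed.

Lemma dstar_bottom x : x \in C 0 -> dstar x = 0.
Proof.
by move=> xC; rewrite dstarE del_top ?linear0 // -(subn0 d) memv_Gam.
Qed.

Lemma memv_del_dstar j x : (j <= d)%N -> x \in C j -> del (dstar x) \in C j.
Proof.
case: j => [|j] jd xC; first by rewrite dstar_bottom // linear0 rpred0.
exact/memv_del/memv_dstar.
Qed.

Lemma memv_dstar_del j x : (j <= d)%N -> x \in C j -> dstar (del x) \in C j.
Proof.
rewrite leq_eqVlt => /orP[/eqP-> | jd] xC.
  by rewrite del_top // linear0 rpred0.
exact/memv_dstar/memv_del.
Qed.

Lemma lap_C j : (j <= d)%N -> lap @: C j = C j.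
Proof.
move=> jd; apply: lker0_limg_eq lker_lap _.
apply/subvP => _ /memv_imgP[x xC ->].
by rewrite lapE rpredD ?memv_del_dstar ?memv_dstar_del.
Qed.

Lemma lap_preim j x : (j <= d)%N -> x \in C j ->
  exists2 y, y \in C j & x = lap y.
Proof. by move=> jd; rewrite -{1}(lap_C jd) => /memv_imgP. Qed.

Lemma del_eq0_boundary j x : (j <= d)%N -> x \in C j -> del x = 0 ->
  exists2 y, y \in C j & x = del (dstar y).
Proof.
move=> jd /(lap_preim jd)[y yC ->] /eqP; rewrite del_lap_eq0 => /eqP dy0.
by exists y; rewrite // lapE dy0 linear0 addr0.
Qed.

Lemma lker_del_C0 : (lker del :&: C 0 = 0)%VS.
Proof.
apply/eqP; rewrite -subv0; apply/subvP => x /memv_capP[/[!memv_ker]/eqP dx xC].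
have [y yC ->] := del_eq0_boundary (leq0n d) xC dx.
by rewrite dstar_bottom // linear0 mem0v.
Qed.

Lemma lker_del_CS j : (j < d)%N -> (lker del :&: C j.+1)%VS = del @: C j.
Proof.
move=> jd; apply/eqP; rewrite eqEsubv; apply/andP; split; apply/subvP.
  move=> x /memv_capP[/[!memv_ker]/eqP dx xC].
  have [y yC ->] := del_eq0_boundary jd xC dx.
  exact/memv_img/memv_dstar.
move=> _ /memv_imgP[x xC ->].
by rewrite memv_cap memv_ker delK eqxx memv_del.
Qed.

Lemma C_lker_decomposition j : (j <= d)%N ->
  C j = (lker dstar :&: C j + lker del :&: C j)%VS.
Proof.
move=> jd; apply/eqP; rewrite eqEsubv subv_add !capvSr !andbT.
apply/subvP => _ /(lap_preim jd)[y yC ->]; rewrite lapE addrC.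
apply: memv_add; rewrite memv_cap memv_ker ?dstarK ?delK eqxx.
  exact: memv_dstar_del.
exact: memv_del_dstar.
Qed.

End Graded.

End Laplacian.

Theorem lemma5p1 (K : fieldType) (V : vectType K) (r d : nat)
    (C : nat -> {vspace V}) (del Gam : 'End(V)) :
  [pchar K] =i pred0 ->
  (0 < r)%N -> d = (2 * r - 1)%N ->
  is_complex d C del ->
  is_chirality d C Gam ->
  bijective (fun v : V => ((Gam \o del)%VF + (del \o Gam)%VF)%R v) ->
  acyclic d C del /\
  (forall j, (j <= d)%N ->
     let Cplus := (lker (del \o Gam)%VF :&: C j)%VS in
     let Cminus := (lker del :&: C j)%VS in
     C j = (Cplus + Cminus)%VS /\ directv (Cplus + Cminus)%VS).
Proof.
move=> _ _ _ [_ del_C del_Cd del_del] [Gam_Gam Gam_C] /bij_inj B_inj.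
split.
  split; first exact: (lker_del_C0 del_del Gam_Gam B_inj del_C del_Cd Gam_C).
  exact: (lker_del_CS del_del Gam_Gam B_inj del_C del_Cd Gam_C).
move=> j jd /=; rewrite -(lker_dstar del Gam_Gam); split.
  exact: (C_lker_decomposition del_del Gam_Gam B_inj del_C del_Cd Gam_C jd).
exact: (directv_lker_dstar_del del_del Gam_Gam B_inj).
Qed.
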